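(* Let $K$ and $L$ be finite simplicial complexes. If $K$ and $L$ have the same simple homotopy type, then $\overline{\mathrm{rank}}(K)=\overline{\mathrm{rank}}(L)$, where $\overline{\mathrm{rank}}(K):=|\mathcal{X}(K)|-\mathrm{rank}(\mathcal{X}(K)_M)$.
   Context: $\mathcal{X}(K)$ is the face poset of $K$ (simplices ordered by inclusion). For a finite poset $X=\{x_1,\dots,x_n\}$ (with a labelling), $X_M=(x_{i,j})$ is the $n\times n$ matrix with $x_{i,j}=0$ if $x_i\le x_j$ and $x_{i,j}=1$ otherwise. Simple homotopy type of simplicial complexes is in the classical sense of Whitehead. *)

From HB Require Import structures.
From mathcomp Require Import all_boot all_order all_algebra.
From mathcomp Require Import finmap.
From Stdlib Require Import Relations.
Set Implicit Arguments. Unset Strict Implicit. Unset Printing Implicit Defensive.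
Import GRing.Theory.
Local Open Scope fset_scope.

Definition simplicial_complex (K : {fset {fset nat}}) : Prop :=
  forall s, s \in K -> s != fset0 /\
    (forall t : {fset nat}, t `<=` s -> t != fset0 -> t \in K).

Definition elem_collapse (K K' : {fset {fset nat}}) : Prop :=
  simplicial_complex K /\
  exists s t : {fset nat},
    [/\ s \in K, t \in K, t `<` s, #|` s| = (#|` t|).+1 &
        (forall u, u \in K -> t `<` u -> u = s)] /\
    K' = K `\` [fset s; t].

Definition simp_iso (K L : {fset {fset nat}}) : Prop :=
  exists f : nat -> nat, injective f /\
    L = [fset [fset f v | v in (s : {fset nat})] | s in K].

(* Same simple homotopy type (Whitehead): related by a finite sequence of
   elementary collapses and expansions, up to simplicial isomorphism. *)
Definition same_simple_homotopy_type (K L : {fset {fset nat}}) : Prop :=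
  exists K', clos_refl_sym_trans _ elem_collapse K K' /\ simp_iso K' L.

Definition face_poset_matrix (K : {fset {fset nat}}) :
    'M[rat]_(size (enum_fset K)) :=
  \matrix_(i < size (enum_fset K), j < size (enum_fset K))
    ((if nth fset0 (enum_fset K) i `<=` nth fset0 (enum_fset K) j
     then 0%R else 1%R) : rat).

Definition rankbar (K : {fset {fset nat}}) : nat :=
  #|` K| - \rank (face_poset_matrix K).

(* The face poset matrix is J - Z, with J the all-ones matrix and Z the zeta
   matrix of the face poset, Z_ij = [x_i <= x_j].  Z is invertible by Moebius
   inversion (mu(x, y) = (-1)^(#|x| + #|y|) on a simplicial complex), and the
   row v with v_x = (-1)^(dim x) satisfies v Z = (1, ..., 1).  Hence
   J - Z = (1 v - I) Z has the rank of the rank-one update 1 v - I, which is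
   n - 1 when v 1 = chi(K) equals 1 and n otherwise: rankbar K = [chi(K) = 1].
   The Euler characteristic chi is invariant under elementary collapses, which
   remove two simplices of adjacent dimensions, and under isomorphisms. *)

From mathcomp Require Import all_boot all_order all_algebra.
From mathcomp Require Import finmap.
From mathcomp Require Import zify.
Set Implicit Arguments. Unset Strict Implicit. Unset Printing Implicit Defensive.
Import GRing.Theory.
Local Open Scope fset_scope.
Local Open Scope ring_scope.

Section SignSums.
Variables (T : choiceType) (R : pzRingType).
Implicit Types (a : T) (x y z : {fset T}) (F : {fset T} -> R).

Definition fsign x : R := (-1) ^+ #|` x|.

Lemma fsign_cardS x y : #|` y| = (#|` x|).+1 -> fsign y = - fsign x.
Proof. by rewrite /fsign => ->; rewrite exprS mulN1r. Qed.

Lemma big_fpowerset_splitU1 a x y F :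
  \sum_(z <- fpowerset y | x `<=` z) F z =
  \sum_(z <- fpowerset y | a |` x `<=` z) F z +
  \sum_(z <- fpowerset (y `\ a) | x `<=` z) F z.
Proof.
rewrite (@big_fsetIDcond _ _ _ _ (fun z : {fset T} => a \in z)); congr (_ + _).
  apply: eq_fbigl_cond => z; rewrite !inE /= fsubUset fsub1set.
  by case: (a \in z); rewrite ?andbF ?andbT.
apply: eq_fbigl_cond => z; rewrite !inE /= !fpowersetE fsubsetD1.
by case: (a \in z); rewrite ?andbF ?andbT.
Qed.

Lemma sum_fsign_interval x y : x `<=` y ->
  \sum_(z <- fpowerset y | x `<=` z) fsign z = if x == y then fsign x else 0.
Proof.
have [n] := ubnP #|` y `\` x|; elim: n x y => // n IH x y lt_yx_n sub_xy.
have [<-|neq_xy] := eqVneq x y.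
  rewrite (@eq_fbigl_cond _ _ _ _ _ [fset x] _ predT) ?big_seq_fset1 // => z.
  by rewrite !inE fpowersetE andbT eqEfsubset andbC.
have [a a_yx] : exists a, a \in y `\` x.
  apply/fset0Pn; rewrite fsetD_eq0.
  by apply: contra neq_xy => sub_yx; rewrite eqEfsubset sub_xy.
have [a_x a_y] : a \notin x /\ a \in y by apply/andP; rewrite -in_fsetD.
have lt_yxa_n : (#|` y `\` (a |` x)| < n)%N.
  by move: lt_yx_n; rewrite (cardfsD1 a) a_yx fsetDDl (fsetUC x).
have sub_axy : a |` x `<=` y by rewrite fsubUset fsub1set a_y.
have sub_xya : x `<=` y `\ a by rewrite fsubsetD1 sub_xy.
rewrite (big_fpowerset_splitU1 a) !IH //; last by rewrite fsetDDl.
have -> : (a |` x == y) = (x == y `\ a).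
  by apply/eqP/eqP => [<-|->]; rewrite ?fsetU1K ?fsetD1K.
case: eqP => _; last by rewrite addr0.
by rewrite (@fsign_cardS x) ?addNr // cardfsU1 a_x.
Qed.

Lemma sum_fsign_nonempty_subsets y : y != fset0 ->
  \sum_(z <- fpowerset y `\ fset0) fsign z = -1.
Proof.
move=> y_n0; apply: (addrI (fsign fset0)).
rewrite -big_fsetD1 ?fpowersetE ?fsub0set // /fsign cardfs0 expr0 subrr.
rewrite (eq_bigl (fun z => fset0 `<=` z)) => [|z]; last by rewrite fsub0set.
by rewrite sum_fsign_interval ?fsub0set // eq_sym (negbTE y_n0).
Qed.

End SignSums.

Arguments fsign {T R} x.

(* [- fsign x] is (-1)^(dim x), as a simplex x has dimension #|x| - 1. *)
Definition euler_char (T : choiceType) (K : {fset {fset T}}) : int :=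
  \sum_(x <- K) - fsign x.

Section ComplexSignSums.
Variables (R : pzRingType) (K : {fset {fset nat}}).
Hypothesis K_complex : simplicial_complex K.

Lemma mem_complex_sub y z : y \in K -> z `<=` y -> (z \in K) = (z != fset0).
Proof.
move=> yK zy; have [_ closed] := K_complex yK.
by apply/idP/idP => [/K_complex[]|]; last exact: closed.
Qed.

Lemma sum_fsign_face_interval x y : x \in K -> y \in K -> x `<=` y ->
  \sum_(z <- K | (x `<=` z) && (z `<=` y)) fsign z =
  if x == y then fsign x else 0 :> R.
Proof.
move=> xK yK xy; rewrite -(sum_fsign_interval R xy); apply: eq_fbigl_cond => z.
rewrite !inE fpowersetE /=; have [zy|] := boolP (z `<=` y); last by rewrite !andbF.
rewrite (mem_complex_sub yK zy) andbT; apply/andP/idP => [[]//|xz]; split=> //.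
have [x_n0 _] := K_complex xK.
by apply: contra x_n0 => /eqP z0; rewrite -fsubset0 -z0.
Qed.

Lemma sum_dim_sign_faces y : y \in K ->
  \sum_(x <- K | x `<=` y) - fsign x = 1 :> R.
Proof.
move=> yK; have [y_n0 _] := K_complex yK.
rewrite sumrN (@eq_fbigl_cond _ _ _ _ _ (fpowerset y `\ fset0) _ xpredT).
  by rewrite sum_fsign_nonempty_subsets // opprK.
move=> z; rewrite !inE fpowersetE /= andbT.
by have [zy|] := boolP (z `<=` y); rewrite ?andbF ?andbT ?(mem_complex_sub yK).
Qed.

End ComplexSignSums.

Section RankOneUpdate.
Variables (F : fieldType) (n : nat) (u : 'cV[F]_n) (v : 'rV[F]_n).
Local Notation lambda := ((v *m u) 0 0).

Lemma mul_row_col_scalar : v *m u = lambda%:M.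
Proof. by apply/matrixP => i j; rewrite !ord1 [RHS]mxE eqxx mulr1n. Qed.

Lemma outer_sub1_unitmx : lambda != 1 -> u *m v - 1%:M \in unitmx.
Proof.
move=> lambda_n1; set a := (lambda - 1)^-1.
have a_lambda : a * lambda = a + 1.
  by rewrite -[lambda in _ * lambda](subrK 1) mulrDr mulVf ?subr_eq0 // mulr1 addrC.
suff /mulmx1_unit[] : (u *m v - 1%:M) *m (a *: (u *m v) - 1%:M) = 1%:M by [].
rewrite mulmxBl !mulmxBr mulmx1 mul1mx -scalemxAr mulmxA -(mulmxA u).
rewrite mul_row_col_scalar mul_mx_scalar -scalemxAl scalerA a_lambda.
by rewrite scalerDl scale1r mulmx1 addrK opprB addrC subrK.
Qed.

Lemma mxrank_outer_sub1 : \rank (u *m v - 1%:M) = (n - (lambda == 1%R))%N.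
Proof.
have [lambda1|/outer_sub1_unitmx/mxrank_unit->] := eqVneq lambda 1; last first.
  by rewrite subn0.
have v_n0 : v != 0.
  by apply: contra_eq_neq lambda1 => ->; rewrite mul0mx mxE eq_sym oner_neq0.
have rank_lt : (\rank (u *m v - 1%:M)%R < n)%N.
  rewrite ltn_neqAle rank_leq_row andbT; apply: contra v_n0 => /eqP full.
  have vK : v *m (u *m v - 1%:M) = 0.
    by rewrite mulmxBr mulmx1 mulmxA mul_row_col_scalar lambda1 mul1mx subrr.
  have unit_W : u *m v - 1%:M \in unitmx by rewrite -row_free_unit /row_free full.
  by rewrite -[v](mulmxK unit_W) vK mul0mx.
have rank_ge : (n <= \rank (u *m v - 1%:M)%R + 1)%N.
  have split1 : 1%:M = u *m v - (u *m v - 1%:M) :> 'M[F]_n.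
    by rewrite opprB addrC subrK.
  rewrite -{1}(mxrank1 F n) {1}split1; apply: leq_trans (mxrank_add _ _) _.
  rewrite mxrank_opp addnC leq_add2l.
  exact: leq_trans (mxrankM_maxl _ _) (rank_leq_col u).
lia.
Qed.
End RankOneUpdate.

Section FacePosetMatrix.
Variable K : {fset {fset nat}}.
Hypothesis K_complex : simplicial_complex K.
Local Notation n := (size (enum_fset K)).

Definition face (i : 'I_n) : {fset nat} := nth fset0 (enum_fset K) i.

Lemma face_in i : face i \in K.
Proof. exact: mem_nth. Qed.

Lemma face_inj : injective face.
Proof. by move=> i j /eqP; rewrite nth_uniq ?fset_uniq // => /eqP/val_inj. Qed.

Lemma big_face (V : nmodType) (P : pred {fset nat}) (G : {fset nat} -> V) :
  \sum_(i < n | P (face i)) G (face i) = \sum_(x <- K | P x) G x.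
Proof. by rewrite (big_nth fset0) big_mkord. Qed.

Definition zeta_mx : 'M[rat]_n := \matrix_(i, j) (face i `<=` face j)%:R.

Definition moebius_mx : 'M[rat]_n :=
  \matrix_(i, j) if face i `<=` face j then fsign (face i) * fsign (face j) else 0.

Definition dim_sign_row : 'rV[rat]_n := \row_i - fsign (face i).

Lemma mul_zeta_moebius : zeta_mx *m moebius_mx = 1%:M.
Proof.
apply/matrixP => i j; rewrite !mxE.
under eq_bigr => k _ do rewrite !mxE mulr_natl mulrb.
rewrite -big_mkcond -big_mkcondr -mulr_suml.
rewrite (big_face (fun z => (face i `<=` z) && (z `<=` face j)) fsign).
have [sub_ij|not_sub_ij] := boolP (face i `<=` face j); last first.
  rewrite big1_fset ?mul0r => [|z _ /andP[iz zj]]; last first.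
    by case/negP: not_sub_ij; exact: fsubset_trans zj.
  by have [eq_ij|] := eqVneq i j; rewrite // eq_ij fsubset_refl in not_sub_ij.
rewrite sum_fsign_face_interval ?face_in // (inj_eq face_inj).
by case: eqVneq => [->|_]; rewrite ?mul0r // -expr2 sqrr_sign.
Qed.

Lemma dim_sign_row_zeta : dim_sign_row *m zeta_mx = const_mx 1.
Proof.
apply/matrixP => i j; rewrite !mxE.
under eq_bigr => k _ do rewrite !mxE mulr_natr mulrb.
rewrite -big_mkcond (big_face (fun z => z `<=` face j) (fun z => - fsign z)).
exact/sum_dim_sign_faces/face_in.
Qed.

Lemma face_poset_matrixE :
  face_poset_matrix K = (const_mx 1 *m dim_sign_row - 1%:M) *m zeta_mx.
Proof.
rewrite mulmxBl mul1mx -mulmxA dim_sign_row_zeta.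
apply/matrixP => i j; rewrite !mxE big_ord1 !mxE mulr1.
by rewrite -/(face i) -/(face j); case: (_ `<=` _); rewrite ?subrr ?subr0.
Qed.

Lemma mxrank_face_poset_matrix :
  \rank (face_poset_matrix K) = (n - (euler_char K == 1))%N.
Proof.
have zeta_unit : zeta_mx \in unitmx by case: (mulmx1_unit mul_zeta_moebius).
rewrite face_poset_matrixE mxrankMfree ?row_free_unit // mxrank_outer_sub1.
have -> : (dim_sign_row *m (const_mx 1 : 'cV_n)) 0 0 = (euler_char K)%:~R.
  rewrite mxE /euler_char rmorph_sum -(big_face predT) /=.
  by apply: eq_bigr => i _; rewrite !mxE mulr1 rmorphN /fsign rmorph_sign.
by rewrite (eqr_int _ _ 1).
Qed.

Lemma rankbar_euler_char : rankbar K = (euler_char K == 1).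
Proof.
rewrite /rankbar mxrank_face_poset_matrix.
have [chi1|] := eqVneq (euler_char K) 1; last by rewrite subn0 subnn.
rewrite subKn // lt0n; apply: contra_eq_neq chi1 => /size0nil K0.
by rewrite /euler_char K0 big_nil.
Qed.

End FacePosetMatrix.

Lemma euler_char_elem_collapse K K' :
  elem_collapse K K' -> euler_char K = euler_char K'.
Proof.
case=> _ [s [t [[sK tK ts card_st _] ->]]].
have t_Ks : t \in K `\ s.
  by rewrite !inE tK andbT; apply: contraTneq ts => ->; rewrite fproperEneq eqxx.
have -> : K `\` [fset s; t] = K `\ s `\ t.
  by apply/fsetP => x; rewrite !inE; case: (x == s); case: (x == t).
rewrite /euler_char (big_fsetD1 s) // (big_fsetD1 t) //= addrA.
by rewrite (fsign_cardS _ card_st) opprK subrr add0r.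
Qed.

Lemma euler_char_simp_iso K L : simp_iso K L -> euler_char K = euler_char L.
Proof.
case=> f [f_inj ->]; rewrite /euler_char big_imfset /=; last first.
  move=> x y _ _ /fsetP eq_fxy; apply/fsetP => v.
  by move: (eq_fxy (f v)); rewrite !(mem_imfset _ _ f_inj).
by apply: eq_bigr => x _; rewrite /fsign card_imfset.
Qed.

Lemma euler_char_same_simple_homotopy_type K L :
  same_simple_homotopy_type K L -> euler_char K = euler_char L.
Proof.
case=> K' [+ /euler_char_simp_iso <-].
elim=> [? ? /euler_char_elem_collapse | | ? ? _ -> | ? ? ? _ -> _] //.
Qed.

Theorem mainTheorem10 (K L : {fset {fset nat}}) :
  simplicial_complex K -> simplicial_complex L ->
  same_simple_homotopy_type K L ->
  rankbar K = rankbar L.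
Proof.
move=> K_complex L_complex /euler_char_same_simple_homotopy_type chiKL.
by rewrite !rankbar_euler_char // chiKL.
Qed.
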